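(* For $n = 3$, the Eigenvector Method satisfies invariance to $\alpha$-transformation on a triad; hence a counterexample showing that the Eigenvector Method violates this invariance requires at least $n=4$ alternatives.
   Context: A pairwise comparison matrix of size $n$ is a matrix $\mathbf{A} = [a_{i,j}]$ with positive entries and $a_{j,i} = 1/a_{i,j}$ for all $i,j$. The Eigenvector Method assigns to $\mathbf{A}$ the vector $\mathbf{w}$ with positive entries, $\sum_i w_i = 1$, and $\mathbf{A}\mathbf{w} = \lambda_{\max}\mathbf{w}$, where $\lambda_{\max}$ is the Perron eigenvalue of $\mathbf{A}$. An $\alpha$-transformation on the triad $(i,j,k)$ (three distinct indices), with $\alpha>0$, maps $\mathbf{A}$ to $\hat{\mathbf{A}}$ with $\hat a_{i,j} = \alpha a_{i,j}$, $\hat a_{j,i} = a_{j,i}/\alpha$, $\hat a_{j,k} = \alpha a_{j,k}$, $\hat a_{k,j} = a_{k,j}/\alpha$, $\hat a_{k,i} = \alpha a_{k,i}$, $\hat a_{i,k} = a_{i,k}/\alpha$, all other entries unchanged. A weighting method $f$ is invariant to $\alpha$-transformation on a triad if $f(\mathbf{A}) = f(\hat{\mathbf{A}})$ whenever $\hat{\mathbf{A}}$ arises from $\mathbf{A}$ by such a transformation. (For $n \le 2$ there are no triads, so the invariance holds vacuously.) *)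

From HB Require Import structures.
From mathcomp Require Import all_boot all_order all_algebra.
From mathcomp Require Import complex.
Set Implicit Arguments. Unset Strict Implicit. Unset Printing Implicit Defensive.
Import Order.TTheory GRing.Theory Num.Theory.
Local Open Scope ring_scope.

Section Defs.
Variable R : rcfType.
Variable n : nat.

Definition is_PCM (A : 'M[R]_n) : Prop :=
  forall i j : 'I_n, 0 < A i j /\ A j i = (A i j)^-1.

Definition is_complex_eigenvalue (A : 'M[R]_n) (mu : R[i]) : Prop :=
  exists v : 'cV[R[i]]_n, v != 0 /\
    (map_mx (fun x : R => x%:C%C) A) *m v = mu *: v.

Definition is_perron_eigenvalue (A : 'M[R]_n) (lam : R) : Prop :=
  is_complex_eigenvalue A lam%:C%C /\
  forall mu : R[i], is_complex_eigenvalue A mu -> `|mu| <= lam%:C%C.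

Definition EM_weights (A : 'M[R]_n) (w : 'cV[R]_n) : Prop :=
  (forall i, 0 < w i 0) /\ \sum_i w i 0 = 1 /\
  exists lam : R, is_perron_eigenvalue A lam /\ A *m w = lam *: w.

Definition alpha_transform (A : 'M[R]_n) (i j k : 'I_n) (alpha : R) : 'M[R]_n :=
  \matrix_(p, q)
    if (p == i) && (q == j) then alpha * A p q
    else if (p == j) && (q == i) then A p q / alpha
    else if (p == j) && (q == k) then alpha * A p q
    else if (p == k) && (q == j) then A p q / alpha
    else if (p == k) && (q == i) then alpha * A p q
    else if (p == i) && (q == k) then A p q / alpha
    else A p q.

End Defs.

(* Rescaling A by a positive eigenvector w gives the PCM B = D^-1 A D, where
   D = diag(w), all of whose row sums equal the eigenvalue; the alpha-transformation commutes
   with this rescaling.  For n = 3 a PCM with constant row sums is forced to be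
   cyclic, b_ij = b_jk = b_ki = x, so its transform is again cyclic with
   parameter alpha x and has constant row sums 1 + alpha x + 1 / (alpha x).
   Hence w is still a positive eigenvector of the transformed matrix, and a
   positive eigenvector of a nonnegative matrix belongs to its Perron root.
   The converse follows by transforming back with 1 / alpha. *)

From HB Require Import structures.
From mathcomp Require Import all_boot all_order all_algebra.
From mathcomp Require Import complex.
From mathcomp Require Import ring lra zify.
Import Order.TTheory GRing.Theory Num.Theory.
Local Open Scope ring_scope.

(* Equal row sums of the PCM [[1, x, y], [1/x, 1, z], [1/y, 1/z, 1]], with the
   diagonal cancelled.  The two row equations make the right-hand side of
   (xy - 1)((x + y)^2 - 1) = x (yz(x + y) - z - y) - (y(x + y) - 1)(xz - x(x + y) + 1)
   vanish, and x + y = 1 is impossible since it would give xz = x - 1 < 0. *)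
Lemma reciprocal3_const_row_sums (R : realFieldType) (x y z : R) :
  0 < x -> 0 < y -> 0 < z -> x + y = x^-1 + z -> x + y = y^-1 + z^-1 ->
  y = x^-1 /\ z = x.
Proof.
move=> x_gt0 y_gt0 z_gt0 row_ij row_ik.
have xz : x * z - x * (x + y) + 1 = 0 by rewrite row_ij; field; rewrite gt_eqF.
have yz : y * z * (x + y) - z - y = 0 by rewrite row_ik; field; rewrite !gt_eqF.
have : (x * y - 1) * ((x + y) ^+ 2 - 1) = 0.
  transitivity (x * (y * z * (x + y) - z - y)
                - (y * (x + y) - 1) * (x * z - x * (x + y) + 1)); first ring.
  by rewrite xz yz; ring.
have xz_gt0 : 0 < x * z by rewrite mulr_gt0.
move/eqP; rewrite mulf_eq0 !subr_eq0 sqrf_eq1 => /orP [/eqP xy1 | /orP [] /eqP s1].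
- have x_neq0 := lt0r_neq0 x_gt0.
  have yE : y = x^-1 by apply: (mulfI x_neq0); rewrite xy1 divff.
  split => //; apply: (mulfI x_neq0); move: xz.
  by rewrite mulrDr xy1; lra.
- by move: xz; rewrite s1; lra.
- by lra.
Qed.

Section PositiveEigenvector.
Context {R : rcfType} {n : nat}.
Implicit Types (M : 'M[R]_n) (w : 'cV[R]_n).

Lemma complex_eigenvalue_real M w lam :
  w != 0 -> M *m w = lam *: w -> is_complex_eigenvalue M lam%:C%C.
Proof.
move=> w_neq0 Mw; exists (map_mx (fun x : R => x%:C%C) w).
by rewrite map_mx_eq0 w_neq0 -map_mxM Mw map_mxZ.
Qed.

(* Compare |v| with w at an index p maximising |v_q| / w_q. *)
Lemma complex_eigenvalue_norm_le M w lam mu :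
  (forall p q, 0 <= M p q) -> (forall p, 0 < w p 0) -> M *m w = lam *: w ->
  is_complex_eigenvalue M mu -> `|mu| <= lam%:C%C.
Proof.
move=> M_ge0 w_gt0 Mw [v [v_neq0 Mv]].
have [q0 vq0_neq0] : exists q, v q 0 != 0.
  apply/existsP; move: v_neq0; apply: contraR; rewrite negb_exists => /forallP v0.
  by apply/eqP/matrixP => a b; rewrite !mxE ord1; apply/eqP/negbNE/v0.
pose N q : R := complex.Re `|v q 0|.
have NE q : `|v q 0| = (N q)%:C%C by rewrite /N RRe_real // normr_real.
have N_ge0 q : 0 <= N q by rewrite -ler0c -NE.
have [p _ N_max] := @arg_maxP _ R 'I_n q0 xpredT (fun q => N q / w q 0) isT.
set c := N p / w p 0 in N_max.
have N_le q : N q <= c * w q 0 by rewrite -ler_pdivrMr //; apply: N_max.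
have Np_gt0 : 0 < N p.
  have Nq0_gt0 : 0 < N q0.
    rewrite lt0r N_ge0 andbT; apply: contraNneq vq0_neq0 => N0.
    by rewrite -normr_eq0 NE N0 rmorph0.
  have c_gt0 : 0 < c by apply: lt_le_trans (N_max q0 isT); rewrite divr_gt0.
  by rewrite -[N p](divfK (lt0r_neq0 (w_gt0 p))) mulr_gt0.
have Mwp : \sum_q M p q * w q 0 = lam * w p 0.
  by have := congr1 (fun m : 'M[R]_(n, 1) => m p 0) Mw; rewrite !mxE.
have : `|mu| * (N p)%:C%C <= lam%:C%C * (N p)%:C%C.
  rewrite -NE -normrM.
  have := congr1 (fun m : 'M[R[i]]_(n, 1) => m p 0) Mv; rewrite !mxE => <-.
  apply: le_trans (ler_norm_sum _ _ _) _.
  apply: (@le_trans _ _ (\sum_q (M p q * (c * w q 0))%:C%C)).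
    apply: ler_sum => q _; rewrite !mxE normrM NE ger0_norm ?ler0c //.
    by rewrite -rmorphM lecR ler_wpM2l.
  rewrite -rmorph_sum -rmorphM lecR.
  under eq_bigr do rewrite mulrCA.
  by rewrite -mulr_sumr Mwp /c mulrCA divfK ?gt_eqF // mulrC.
by rewrite ler_pM2r ?ltcR.
Qed.

Lemma perron_eigenvalue_pos_eigenvector M w lam (p0 : 'I_n) :
  (forall p q, 0 <= M p q) -> (forall p, 0 < w p 0) -> M *m w = lam *: w ->
  is_perron_eigenvalue M lam.
Proof.
move=> M_ge0 w_gt0 Mw; split.
  apply: complex_eigenvalue_real Mw.
  by apply/eqP => /matrixP/(_ p0 0); rewrite mxE; apply/eqP/lt0r_neq0.
by move=> mu; apply: complex_eigenvalue_norm_le Mw.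
Qed.

End PositiveEigenvector.

Section PCM.
Context {R : rcfType} {n : nat}.
Implicit Types (A : 'M[R]_n) (w : 'cV[R]_n).

Lemma PCM_diag A : is_PCM A -> forall p, A p p = 1.
Proof.
move=> HA p; have [App_gt0 AppV] := HA p p.
have : A p p * A p p = 1 by rewrite {1}AppV mulVf ?gt_eqF.
by nra.
Qed.

Lemma alpha_transformK A (i j k : 'I_n) alpha : alpha != 0 ->
  alpha_transform (alpha_transform A i j k alpha) i j k alpha^-1 = A.
Proof.
move=> alpha_neq0; apply/matrixP => p q; rewrite !mxE.
move: ((p == i) && (q == j)) ((p == j) && (q == i)) ((p == j) && (q == k))
  ((p == k) && (q == j)) ((p == k) && (q == i)) ((p == i) && (q == k)).
by do 6!case; rewrite ?invrK ?mulKf ?divfK.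
Qed.

Lemma alpha_transform_PCM A (i j k : 'I_n) alpha :
  is_PCM A -> i != j -> j != k -> i != k -> 0 < alpha ->
  is_PCM (alpha_transform A i j k alpha).
Proof.
move=> HA hij hjk hik alpha_gt0 p q; have [Apq_gt0 AqpV] := HA p q.
rewrite !mxE AqpV; move: hij hjk hik.
do ![case: eqP => [?|?]; subst => //=] => _ _ _.
all: split; first by [apply: mulr_gt0 | apply: divr_gt0].
all: by rewrite invfM ?invrK mulrC.
Qed.

Definition rescale_mx A w : 'M[R]_n := \matrix_(p, q) (A p q * w q 0 / w p 0).

Lemma rescale_mx_alpha_transform A w (i j k : 'I_n) alpha :
  rescale_mx (alpha_transform A i j k alpha) w =
  alpha_transform (rescale_mx A w) i j k alpha.
Proof. by apply/matrixP => p q; rewrite !mxE; do ![case: ifP => _]; ring. Qed.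

Lemma rescale_mx_PCM A w :
  (forall p, 0 < w p 0) -> is_PCM A -> is_PCM (rescale_mx A w).
Proof.
move=> w_gt0 HA p q; have [Apq_gt0 AqpV] := HA p q.
rewrite !mxE AqpV; split; first by rewrite divr_gt0 ?mulr_gt0.
by field; rewrite !gt_eqF.
Qed.

Lemma eigenvector_rescale_mxE A w lam : (forall p, w p 0 != 0) ->
  A *m w = lam *: w <-> forall p, \sum_q rescale_mx A w p q = lam.
Proof.
move=> w_neq0.
have rowE p : \sum_q rescale_mx A w p q = (A *m w) p 0 / w p 0.
  by rewrite mxE mulr_suml; apply: eq_bigr => q _; rewrite mxE.
split => [Aw p | rows]; first by rewrite rowE Aw mxE mulfK.
by apply/matrixP => p r; rewrite ord1 [RHS]mxE -(rows p) rowE divfK.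
Qed.

End PCM.

Lemma triad_cover {n} {i j k : 'I_n} : (n <= 3)%N ->
  i != j -> j != k -> i != k -> forall p : 'I_n, [|| p == i, p == j | p == k].
Proof.
move=> n_le3 + + + p; rewrite -!val_eqE.
by case: p i j k => [p ?] [i ?] [j ?] [k ?] /=; lia.
Qed.

Lemma big_triad {V : nmodType} {n} {i j k : 'I_n} (F : 'I_n -> V) :
  i != j -> j != k -> i != k -> (forall p, [|| p == i, p == j | p == k]) ->
  \sum_q F q = F i + F j + F k.
Proof.
move=> hij hjk hik covers.
rewrite (bigD1 i) // (bigD1 j) 1?eq_sym // (bigD1 k) /=; last first.
  by rewrite [k == i]eq_sym [k == j]eq_sym hik hjk.
rewrite big1 ?addr0 ?addrA // => q /andP [/andP [qi qj] qk].
by move: (covers q); rewrite (negbTE qi) (negbTE qj) (negbTE qk).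
Qed.

Section Triad.
Context {R : rcfType} {n : nat} {i j k : 'I_n}.
Hypotheses (hij : i != j) (hjk : j != k) (hik : i != k).
Hypothesis triad_covers : forall p : 'I_n, [|| p == i, p == j | p == k].

Lemma alpha_transform_const_row_sums (B : 'M[R]_n) lam alpha :
  is_PCM B -> alpha != 0 -> (forall p, \sum_q B p q = lam) ->
  forall p, \sum_q alpha_transform B i j k alpha p q
            = 1 + alpha * B i j + (alpha * B i j)^-1.
Proof.
move=> HB alpha_neq0 rows.
have Bpos p q : 0 < B p q := (HB p q).1.
have BV p q : B q p = (B p q)^-1 := (HB p q).2.
have row p : B p i + B p j + B p k = lam.
  by rewrite -(rows p) (big_triad _ hij hjk hik triad_covers).
have [BikE BjkE] : B i k = (B i j)^-1 /\ B j k = B i j.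
  move: (row i) (row j) (row k); rewrite (BV i j) (BV i k) (BV j k) !(PCM_diag _ HB).
  by move=> ri rj rk; apply: reciprocal3_const_row_sums; rewrite ?Bpos //; lra.
have [hji hkj hki] : [/\ j != i, k != j & k != i] by split; rewrite eq_sym.
move=> p; rewrite (big_triad _ hij hjk hik triad_covers).
case/or3P: (triad_covers p) => /eqP ->; rewrite !mxE !eqxx ?(negbTE hij, negbTE hjk,
  negbTE hik, negbTE hji, negbTE hkj, negbTE hki) /= !(PCM_diag _ HB).
all: rewrite ?(BV i j, BV i k, BV j k) ?BikE ?BjkE.
all: by field; rewrite alpha_neq0 lt0r_neq0.
Qed.

Lemma EM_weights_alpha_transform (A : 'M[R]_n) alpha w :
  is_PCM A -> 0 < alpha -> EM_weights A w ->
  EM_weights (alpha_transform A i j k alpha) w.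
Proof.
move=> HA alpha_gt0 [w_gt0 [w_sum [lam [_ Aw]]]].
have w_neq0 p : w p 0 != 0 := lt0r_neq0 (w_gt0 p).
have rows := (eigenvector_rescale_mxE _ _ _ w_neq0).1 Aw.
have := alpha_transform_const_row_sums _ _ _
  (rescale_mx_PCM _ _ w_gt0 HA) (lt0r_neq0 alpha_gt0) rows.
rewrite -rescale_mx_alpha_transform => /(eigenvector_rescale_mxE _ _ _ w_neq0) Tw.
do 2!split => //; eexists; split; last exact: Tw.
apply: perron_eigenvalue_pos_eigenvector i _ w_gt0 Tw => p q.
have T_PCM : is_PCM (alpha_transform A i j k alpha) by apply: alpha_transform_PCM.
exact: ltW (T_PCM p q).1.
Qed.

End Triad.

Theorem corollary3p1 (R : rcfType) (n : nat) (A : 'M[R]_n)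
    (i j k : 'I_n) (alpha : R) :
  (n <= 3)%N -> is_PCM A ->
  i != j -> j != k -> i != k -> 0 < alpha ->
  forall w : 'cV[R]_n,
    EM_weights A w <-> EM_weights (alpha_transform A i j k alpha) w.
Proof.
move=> n_le3 HA hij hjk hik alpha_gt0 w.
have covers := triad_cover n_le3 hij hjk hik.
split; first exact: EM_weights_alpha_transform.
move=> EM_T; rewrite -(alpha_transformK A i j k _ (lt0r_neq0 alpha_gt0)).
apply: EM_weights_alpha_transform EM_T => //; last by rewrite invr_gt0.
exact: alpha_transform_PCM.
Qed.
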